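(* Let $G$ be a small category and let $X$ be a set equipped with a partial category action by $G$. Then $X$ admits a universal globalization: there exist a set $Y$ equipped with a global category action by $G$ and a $G$-function $i : X \to Y$ such that for every set $Z$ equipped with a global category action by $G$ and every $G$-function $j : X \to Z$ there is a unique $G$-function $k : Y \to Z$ with $j = k \circ i$.
   Context: Conventions: $G$ is a small category; objects are identified with their identity morphisms, so ${\rm ob}(G) \subseteq {\rm mor}(G)$. For $g \in {\rm mor}(G)$, $d(g)$ and $c(g)$ denote its domain and codomain, and $G^2 = \{(g,h) \in {\rm mor}(G)\times{\rm mor}(G) \mid d(g) = c(h)\}$. A partial set action of ${\rm mor}(G)$ on a set $X$ is a partial function ${\rm mor}(G) \times X \to X$ (a function defined on some subset of ${\rm mor}(G)\times X$), written $(g,x) \mapsto g\cdot x$ where defined. It is a partial category action by $G$ on $X$ if: (C1) for every $x \in X$ there is $e \in {\rm ob}(G)$ with $e\cdot x$ defined, and whenever $f \in {\rm ob}(G)$ and $f \cdot x$ is defined, $f\cdot x = x$; (C2) if $g \cdot x$ is defined then $d(g)\cdot x$ is defined; (C3) if $(g,h) \in G^2$ and $h\cdot x$ is defined, then $(gh)\cdot x$ is defined if and only if $g\cdot(h\cdot x)$ is defined, and in that case they are equal. The action is global if moreover (C4) whenever $d(g)\cdot x$ is defined, $g \cdot x$ is defined. If $X$ and $Y$ carry partial category actions by $G$, a $G$-function $i : X \to Y$ is a function such that whenever $g\cdot x$ is defined, $g\cdot i(x)$ is defined and $i(g\cdot x) = g \cdot i(x)$. *)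

(* Small categories in the "arrows-only" presentation:
   objects are identified with their identity morphisms (ob(G) ⊆ mor(G)),
   composition is a partial operation defined exactly on G^2. *)

Record SmallCat := {
  mor : Type;
  is_ob : mor -> Prop;
  dom : mor -> mor;
  cod : mor -> mor;
  comp : mor -> mor -> option mor;
  dom_ob : forall g, is_ob (dom g);
  cod_ob : forall g, is_ob (cod g);
  ob_dom : forall e, is_ob e -> dom e = e;
  ob_cod : forall e, is_ob e -> cod e = e;
  comp_defined : forall g h, (exists gh, comp g h = Some gh) <-> dom g = cod h;
  comp_dom : forall g h gh, comp g h = Some gh -> dom gh = dom h;
  comp_cod : forall g h gh, comp g h = Some gh -> cod gh = cod g;
  comp_id_r : forall g, comp g (dom g) = Some g;
  comp_id_l : forall g, comp (cod g) g = Some g;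
  comp_assoc : forall g h k gh hk,
      comp g h = Some gh -> comp h k = Some hk -> comp gh k = comp g hk
}.

Definition pact (G : SmallCat) (X : Type) := mor G -> X -> option X.

Definition defined {G : SmallCat} {X : Type} (a : pact G X) (g : mor G) (x : X) : Prop :=
  exists y, a g x = Some y.

Definition C1 {G : SmallCat} {X : Type} (a : pact G X) : Prop :=
  (forall x : X, exists e, is_ob G e /\ defined a e x) /\
  (forall (f : mor G) (x y : X), is_ob G f -> a f x = Some y -> y = x).

Definition C2 {G : SmallCat} {X : Type} (a : pact G X) : Prop :=
  forall (g : mor G) (x : X), defined a g x -> defined a (dom G g) x.

(* (C3): for (g,h) in G^2 with h.x defined, (gh).x is defined iff g.(h.x) is,
   and then they are equal; i.e. the two partial values coincide. *)
Definition C3 {G : SmallCat} {X : Type} (a : pact G X) : Prop :=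
  forall (g h gh : mor G) (x hx : X),
    dom G g = cod G h -> comp G g h = Some gh -> a h x = Some hx ->
    a gh x = a g hx.

Definition C4 {G : SmallCat} {X : Type} (a : pact G X) : Prop :=
  forall (g : mor G) (x : X), defined a (dom G g) x -> defined a g x.

Definition partial_cat_action {G : SmallCat} {X : Type} (a : pact G X) : Prop :=
  C1 a /\ C2 a /\ C3 a.

Definition global_cat_action {G : SmallCat} {X : Type} (a : pact G X) : Prop :=
  partial_cat_action a /\ C4 a.

Definition G_function {G : SmallCat} {X Y : Type} (a : pact G X) (b : pact G Y)
  (i : X -> Y) : Prop :=
  forall (g : mor G) (x y : X), a g x = Some y -> b g (i x) = Some (i y).

(* The globalization Y consists of the formal expressions g.x with d(g).x
   defined, modulo the smallest left-congruence identifying (gh).x with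
   g.(h.x) and e.x with f.x for objects e, f acting on x.  G acts on Y by
   composing on the left, and i(x) is the class of e.x for any object e acting
   on x.  For a global action on Z and a G-function j, the class of g.x must go
   to g.j(x), which is always defined because the action on Z is global;
   the relations defining Y are respected because j is a G-function. *)

From Stdlib Require Import ClassicalEpsilon FunctionalExtensionality
  PropExtensionality ProofIrrelevance.

Section PerQuotient.

Variables (T : Type) (R : T -> T -> Prop).
Hypotheses (R_sym : forall p q, R p q -> R q p)
           (R_trans : forall p q r, R p q -> R q r -> R p r).

Definition pclass := {P : T -> Prop | exists p, R p p /\ P = R p}.

Definition in_pclass (y : pclass) (p : T) : Prop := proj1_sig y p.

Lemma pclass_mem_rel (y : pclass) p q : in_pclass y p -> in_pclass y q -> R p q.
Proof. destruct y as [P [r [Hr HP]]]; unfold in_pclass; simpl in *; subst P; eauto. Qed.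

Lemma pclass_mem_refl (y : pclass) p : in_pclass y p -> R p p.
Proof. intro M; exact (pclass_mem_rel y p p M M). Qed.

Lemma pclass_mem_closed (y : pclass) p q : in_pclass y p -> R p q -> in_pclass y q.
Proof. destruct y as [P [r [Hr HP]]]; unfold in_pclass; simpl in *; subst P; eauto. Qed.

Lemma pclass_inhabited (y : pclass) : exists p, in_pclass y p.
Proof. destruct y as [P [p [Hp HP]]]; subst P; exists p; exact Hp. Qed.

Lemma pclass_of_refl p : R p p -> exists y : pclass, in_pclass y p.
Proof. intro Hp; exists (exist _ (R p) (ex_intro _ p (conj Hp eq_refl))); exact Hp. Qed.

Lemma pclass_eq (y y' : pclass) p : in_pclass y p -> in_pclass y' p -> y = y'.
Proof.
  intros M M'.
  destruct y as [P HP], y' as [P' HP']; unfold in_pclass in M, M'; simpl in M, M'.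
  assert (Hmem : forall (Q Q' : T -> Prop) (HQ : exists p, R p p /\ Q = R p)
                        (HQ' : exists p, R p p /\ Q' = R p),
             Q p -> Q' p -> forall q, Q q -> Q' q).
  { intros Q Q' [r [_ ->]] [r' [_ ->]] A A' q B.
    exact (R_trans _ _ _ A' (R_trans _ _ _ (R_sym _ _ A) B)). }
  assert (P = P') as <-.
  { apply functional_extensionality; intro q.
    apply propositional_extensionality; split.
    - exact (Hmem P P' HP HP' M M' q).
    - exact (Hmem P' P HP' HP M' M q). }
  f_equal; apply proof_irrelevance.
Qed.

End PerQuotient.

Arguments pclass {T}.
Arguments in_pclass {T R}.
Arguments pclass_mem_rel {T R}.
Arguments pclass_mem_refl {T R}.
Arguments pclass_mem_closed {T R}.
Arguments pclass_inhabited {T R}.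
Arguments pclass_of_refl {T R}.
Arguments pclass_eq {T R}.

Section OptionOfRel.

Variables (A B : Type) (F : A -> B -> Prop).

Definition option_of_rel (x : A) : option B :=
  match excluded_middle_informative (exists y, F x y) with
  | left e => Some (proj1_sig (constructive_indefinite_description _ e))
  | right _ => None
  end.

Lemma option_of_rel_some x y :
  (forall y1 y2, F x y1 -> F x y2 -> y1 = y2) -> F x y -> option_of_rel x = Some y.
Proof.
  intros Ffun Fxy; unfold option_of_rel.
  destruct excluded_middle_informative as [e | n]; [| exfalso; eauto].
  destruct constructive_indefinite_description as [z Fxz]; simpl; f_equal; eauto.
Qed.

Lemma option_of_rel_inv x y : option_of_rel x = Some y -> F x y.
Proof.
  unfold option_of_rel.
  destruct excluded_middle_informative as [e | n]; [| discriminate].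
  destruct constructive_indefinite_description as [z Fxz]; simpl; congruence.
Qed.

End OptionOfRel.

Arguments option_of_rel {A B}.
Arguments option_of_rel_some {A B F}.
Arguments option_of_rel_inv {A B F}.

Section SmallCatFacts.

Variable G : SmallCat.

Lemma comp_dom_cod (g h gh : mor G) : comp G g h = Some gh -> dom G g = cod G h.
Proof. intro E; apply (comp_defined G); eauto. Qed.

Lemma comp_exists (g h : mor G) : dom G g = cod G h -> exists gh, comp G g h = Some gh.
Proof. apply (comp_defined G). Qed.

Lemma comp_ob_l (f g fg : mor G) : is_ob G f -> comp G f g = Some fg -> fg = g.
Proof.
  intros Hf E.
  pose proof (comp_dom_cod _ _ _ E) as Hd.
  rewrite (ob_dom G f Hf) in Hd; subst f.
  rewrite comp_id_l in E; congruence.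
Qed.

End SmallCatFacts.

Lemma act_cod {G : SmallCat} {X : Type} (a : pact G X) (g : mor G) (x y : X) :
  C3 a -> a g x = Some y -> a (cod G g) y = Some y.
Proof.
  intros H3 E.
  rewrite <- (H3 (cod G g) g g x y); auto using comp_id_l.
  rewrite ob_dom; auto using cod_ob.
Qed.

Section Globalization.

Variables (G : SmallCat) (X : Type) (a : pact G X).
Hypothesis Ha : partial_cat_action a.

Definition valid (p : mor G * X) : Prop := defined a (dom G (fst p)) (snd p).

(* [Rel (g, x) (g', x')] reads "g.x = g'.x'" in the globalization. *)
Inductive Rel : mor G * X -> mor G * X -> Prop :=
| Rel_refl p : valid p -> Rel p p
| Rel_sym p q : Rel p q -> Rel q p
| Rel_trans p q r : Rel p q -> Rel q r -> Rel p r
| Rel_act g h gh x hx : comp G g h = Some gh -> a h x = Some hx -> Rel (gh, x) (g, hx)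
| Rel_ob e f x : is_ob G e -> is_ob G f -> defined a e x -> defined a f x ->
    Rel (e, x) (f, x)
| Rel_comp_l h g g' x x' hg hg' : Rel (g, x) (g', x') ->
    comp G h g = Some hg -> comp G h g' = Some hg' -> Rel (hg, x) (hg', x').

Lemma valid_comp g k gk x : valid (k, x) -> comp G g k = Some gk -> valid (gk, x).
Proof. unfold valid; simpl; intros V E; rewrite (comp_dom G _ _ _ E); exact V. Qed.

Lemma Rel_valid p q : Rel p q -> valid p /\ valid q.
Proof.
  destruct Ha as [[_ _] [H2 H3]].
  induction 1 as [| | | g h gh x hx E Ehx | e f x He Hf De Df
                  | h g g' x x' hg hg' _ [Vg Vg'] E E']; try tauto.
  - split; unfold valid; simpl.
    + rewrite (comp_dom G _ _ _ E); apply H2; eexists; eauto.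
    + rewrite (comp_dom_cod G _ _ _ E); eexists; eapply act_cod; eauto.
  - unfold valid; simpl; rewrite !ob_dom; auto.
  - split; eapply valid_comp; eauto.
Qed.

Lemma Rel_refl_valid p : Rel p p <-> valid p.
Proof. split; [intro R; exact (proj1 (Rel_valid p p R)) | apply Rel_refl]. Qed.

Definition Y := pclass Rel.

Lemma Y_eq (y y' : Y) p : in_pclass y p -> in_pclass y' p -> y = y'.
Proof. apply pclass_eq; [exact Rel_sym | exact Rel_trans]. Qed.

Lemma Y_mem_rel (y : Y) p q : in_pclass y p -> in_pclass y q -> Rel p q.
Proof. apply pclass_mem_rel; [exact Rel_sym | exact Rel_trans]. Qed.

Lemma Y_mem_valid (y : Y) p : in_pclass y p -> valid p.
Proof.
  intro M; apply Rel_refl_valid.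
  apply (pclass_mem_refl Rel_sym Rel_trans y p M).
Qed.

Lemma Y_of_valid p : valid p -> exists y : Y, in_pclass y p.
Proof. intro V; apply pclass_of_refl, Rel_refl_valid, V. Qed.

Definition Y_act_rel (h : mor G) (y y' : Y) : Prop :=
  exists g x hg, in_pclass y (g, x) /\ comp G h g = Some hg /\
                 in_pclass y' (hg, x).

Lemma Y_act_rel_functional h y y1 y2 :
  Y_act_rel h y y1 -> Y_act_rel h y y2 -> y1 = y2.
Proof.
  intros (g & x & hg & M & E & M1) (g' & x' & hg' & M' & E' & M2).
  apply (Y_eq y1 y2 (hg', x')); [| exact M2].
  eapply (pclass_mem_closed Rel_sym Rel_trans); [exact M1 |].
  eapply Rel_comp_l; eauto using Y_mem_rel.
Qed.

Definition Y_act : pact G Y := fun h => option_of_rel (Y_act_rel h).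

Lemma Y_act_some h y y' : Y_act_rel h y y' -> Y_act h y = Some y'.
Proof. apply option_of_rel_some, Y_act_rel_functional. Qed.

Lemma Y_act_inv h y y' : Y_act h y = Some y' -> Y_act_rel h y y'.
Proof. apply option_of_rel_inv. Qed.

Lemma Y_act_mem h y g x hg :
  in_pclass y (g, x) -> comp G h g = Some hg ->
  exists y', Y_act h y = Some y' /\ in_pclass y' (hg, x).
Proof.
  intros M E.
  destruct (Y_of_valid (hg, x)) as [y' M']; [eauto using valid_comp, Y_mem_valid |].
  exists y'; split; [apply Y_act_some; exists g, x, hg |]; auto.
Qed.

Lemma Y_act_C1 : C1 Y_act.
Proof.
  split.
  - intro y; destruct (pclass_inhabited y) as [[g x] M].
    destruct (Y_act_mem (cod G g) y g x g M (comp_id_l G g)) as [y' [E _]].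
    exists (cod G g); split; [apply cod_ob | exists y'; exact E].
  - intros f y y' Hf E.
    destruct (Y_act_inv _ _ _ E) as (g & x & fg & M & Efg & M').
    rewrite (comp_ob_l G f g fg Hf Efg) in M'; eauto using Y_eq.
Qed.

Lemma Y_act_C4 : C4 Y_act.
Proof.
  intros g y [y' E].
  destruct (Y_act_inv _ _ _ E) as (k & x & gk & M & Egk & _).
  pose proof (comp_dom_cod G _ _ _ Egk) as Hd.
  rewrite ob_dom in Hd by apply dom_ob.
  destruct (comp_exists G _ _ Hd) as [gk' Egk'].
  destruct (Y_act_mem g y k x gk' M Egk') as [y'' [E'' _]]; exists y''; exact E''.
Qed.

Lemma Y_act_C2 : C2 Y_act.
Proof.
  intros g y Dg; apply Y_act_C4.
  destruct Dg as [y' E].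
  destruct (Y_act_inv _ _ _ E) as (k & x & gk & M & Egk & _).
  rewrite ob_dom by apply dom_ob.
  exists y; apply Y_act_some; exists k, x, k.
  rewrite (comp_dom_cod G _ _ _ Egk); auto using comp_id_l.
Qed.

Lemma Y_act_C3 : C3 Y_act.
Proof.
  intros g h gh y hy Hgh Egh E.
  destruct (Y_act_inv _ _ _ E) as (k & x & hk & M & Ehk & Mhy).
  assert (Hd : dom G g = cod G hk) by (rewrite (comp_cod G _ _ _ Ehk); exact Hgh).
  destruct (comp_exists G _ _ Hd) as [ghk Eghk].
  destruct (Y_act_mem g hy hk x ghk Mhy Eghk) as [y' [E1 M1]].
  rewrite E1; apply Y_act_some; exists k, x, ghk.
  rewrite (comp_assoc G g h k gh hk Egh Ehk); auto.
Qed.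

Lemma Y_act_global : global_cat_action Y_act.
Proof. repeat split; auto using Y_act_C2, Y_act_C3, Y_act_C4; apply Y_act_C1. Qed.

Definition ob_at (x : X) : mor G :=
  proj1_sig (constructive_indefinite_description _ (proj1 (proj1 Ha) x)).

Lemma ob_at_spec x : is_ob G (ob_at x) /\ defined a (ob_at x) x.
Proof. unfold ob_at; destruct constructive_indefinite_description; auto. Qed.

Lemma valid_ob_at x : valid (ob_at x, x).
Proof. unfold valid; simpl; rewrite ob_dom; apply ob_at_spec. Qed.

Definition unit_Y (x : X) : Y :=
  exist _ (Rel (ob_at x, x)) (ex_intro _ _ (conj (Rel_refl _ (valid_ob_at x)) eq_refl)).

Lemma unit_Y_mem g x : defined a (dom G g) x -> in_pclass (unit_Y x) (dom G g, x).
Proof. intro D; apply Rel_ob; try apply ob_at_spec; auto using dom_ob. Qed.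

Lemma Y_act_unit_Y g x y :
  defined a (dom G g) x -> in_pclass y (g, x) -> Y_act g (unit_Y x) = Some y.
Proof.
  intros D M; apply Y_act_some; exists (dom G g), x, g.
  auto using unit_Y_mem, comp_id_r.
Qed.

Lemma unit_Y_G_function : G_function a Y_act unit_Y.
Proof.
  intros g x y E.
  destruct Ha as [[_ _] [H2 H3]].
  apply Y_act_unit_Y; [apply H2; eexists; eauto |].
  apply Rel_trans with (cod G g, y).
  - apply Rel_ob; try apply ob_at_spec; auto using cod_ob.
    eexists; eapply act_cod; eauto.
  - apply Rel_sym, Rel_act with g; auto using comp_id_l.
Qed.

Section Universal.

Variables (Z : Type) (c : pact G Z) (j : X -> Z).
Hypotheses (Hc : global_cat_action c) (Hj : G_function a c j).

Definition image (p : mor G * X) : option Z := c (fst p) (j (snd p)).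

(* Rel_comp_l is respected only because h.j(x) is defined, i.e. because c is global. *)
Lemma image_Rel p q : Rel p q -> image p = image q.
Proof.
  destruct Ha as [[_ Hob] _].
  destruct Hc as [[_ [_ Hc3]] Hc4].
  unfold image; induction 1 as [| | | g h gh x hx E Ehx | e f x He Hf [x1 E1] [x2 E2]
                                 | h g g' x x' hg hg' R IH E E']; simpl in *;
    try congruence.
  - exact (Hc3 g h gh (j x) (j hx) (comp_dom_cod G _ _ _ E) E (Hj _ _ _ Ehx)).
  - rewrite (Hj _ _ _ E1), (Hj _ _ _ E2).
    rewrite (Hob _ _ _ He E1), (Hob _ _ _ Hf E2); reflexivity.
  - destruct (proj1 (Rel_valid _ _ R)) as [x1 E1]; simpl in E1.
    destruct (Hc4 g (j x)) as [z Ez]; [eexists; apply Hj; eauto |].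
    rewrite (Hc3 h g hg (j x) z (comp_dom_cod G _ _ _ E) E Ez).
    symmetry; rewrite IH in Ez.
    exact (Hc3 h g' hg' (j x') z (comp_dom_cod G _ _ _ E') E' Ez).
Qed.

Lemma image_valid p : valid p -> exists z, image p = Some z.
Proof.
  destruct p as [g x]; intros [x1 E1]; apply (proj2 Hc).
  eexists; apply Hj; eauto.
Qed.

Lemma image_class (y : Y) : exists z, exists p, in_pclass y p /\ image p = Some z.
Proof.
  destruct (pclass_inhabited y) as [p M].
  destruct (image_valid p (Y_mem_valid y p M)) as [z Ez]; eauto.
Qed.

Definition induced (y : Y) : Z :=
  proj1_sig (constructive_indefinite_description _ (image_class y)).

Lemma induced_spec y p : in_pclass y p -> image p = Some (induced y).
Proof.
  intro M; unfold induced.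
  destruct constructive_indefinite_description as [z [q [Mq Eq]]]; simpl.
  rewrite <- Eq; eauto using image_Rel, Y_mem_rel.
Qed.

Lemma induced_G_function : G_function Y_act c induced.
Proof.
  intros g y y' E.
  destruct (Y_act_inv _ _ _ E) as (k & x & gk & M & Egk & M').
  pose proof (induced_spec _ _ M) as Ey; pose proof (induced_spec _ _ M') as Ey'.
  unfold image in *; simpl in *.
  destruct Hc as [[_ [_ Hc3]] _].
  rewrite <- (Hc3 g k gk (j x) (induced y) (comp_dom_cod G _ _ _ Egk) Egk Ey); exact Ey'.
Qed.

Lemma induced_unit_Y x : j x = induced (unit_Y x).
Proof.
  pose proof (induced_spec (unit_Y x) (ob_at x, x)
                (Rel_refl _ (valid_ob_at x))) as E.
  destruct (ob_at_spec x) as [Hob [x1 E1]].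
  rewrite (proj2 (proj1 Ha) _ _ _ Hob E1) in E1.
  unfold image in E; simpl in E; rewrite (Hj _ _ _ E1) in E; congruence.
Qed.

Lemma induced_unique (k : Y -> Z) :
  G_function Y_act c k -> (forall x, j x = k (unit_Y x)) -> k = induced.
Proof.
  intros Hk Hjk; apply functional_extensionality; intro y.
  destruct (pclass_inhabited y) as [[g x] M].
  pose proof (Hk _ _ _ (Y_act_unit_Y g x y (Y_mem_valid y _ M) M)) as E.
  rewrite <- Hjk in E.
  pose proof (induced_spec y _ M) as E'; unfold image in E'; simpl in E'; congruence.
Qed.

End Universal.

End Globalization.

Theorem theorem1p4 (G : SmallCat) (X : Type) (a : pact G X) :
  partial_cat_action a ->
  exists (Y : Type) (b : pact G Y) (i : X -> Y),
    global_cat_action b /\ G_function a b i /\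
    forall (Z : Type) (c : pact G Z), global_cat_action c ->
      forall j : X -> Z, G_function a c j ->
        exists k : Y -> Z,
          (G_function b c k /\ (forall x, j x = k (i x))) /\
          (forall k' : Y -> Z,
             G_function b c k' /\ (forall x, j x = k' (i x)) -> k' = k).
Proof.
  intro Ha.
  exists (Y G X a), (Y_act G X a), (unit_Y G X a Ha).
  split; [exact (Y_act_global G X a Ha) |].
  split; [exact (unit_Y_G_function G X a Ha) |].
  intros Z c Hc j Hj.
  exists (induced G X a Ha Z c j Hc Hj); split.
  - split; [apply induced_G_function | apply induced_unit_Y].
  - intros k' [Hk' Hjk']; exact (induced_unique G X a Ha Z c j Hc Hj k' Hk' Hjk').
Qed.
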